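(* Let $n\ge1$, let $\preceq$ be an admissible order on $L([0,1])$ and let $F\colon L([0,1])^2\to L([0,1])$, $G\colon L([0,1])^n\to L([0,1])$. The interval-valued Sugeno-like $FG$-functional $\mathbf S_m^{F,G}$ is idempotent (i.e. $\mathbf S_m^{F,G}(X,\dots,X)=X$ for all $X\in L([0,1])$) for every IV fuzzy measure $m$ w.r.t. $\preceq$ whenever: (i) $F(X,\mathbf 1)=X$ for all $X\in L([0,1])$ and $G=\mathrm{Proj}_1$; or (ii) $F(X,\mathbf 1)=X$ for all $X\in L([0,1])$, $F$ is non-decreasing in the second variable and $G=\vee$; or (iii) $G$ is idempotent and $F(X,Y)=X$ for all $X,Y\in L([0,1])$.
   Context: $N=\{1,\dots,n\}$. $L([0,1])=\{[a,b]:0\le a\le b\le1\}$, $\mathbf0=[0,0]$, $\mathbf1=[1,1]$. An admissible order $\preceq$ is a total order on $L([0,1])$ such that $[a,b]\preceq[c,d]$ whenever $a\le c$ and $b\le d$. $\vee$ denotes the maximum w.r.t. $\preceq$; monotonicity is w.r.t. $\preceq$; $\mathrm{Proj}_1(X_1,\dots,X_n)=X_1$; $G$ idempotent means $G(X,\dots,X)=X$. An IV fuzzy measure w.r.t. $\preceq$ is $m\colon 2^N\to L([0,1])$ with $m(\emptyset)=\mathbf0$, $m(N)=\mathbf1$, $m(A)\preceq m(B)$ for $A\subseteq B$. For a permutation $\sigma$ of $N$, $E_{\sigma(i)}=\{\sigma(i),\dots,\sigma(n)\}$. The IV Sugeno-like $FG$-functional w.r.t. $m$ is $\mathbf S_m^{F,G}(X_1,\dots,X_n)=G\big(F(X_{\sigma(1)},m(E_{\sigma(1)})),\dots,F(X_{\sigma(n)},m(E_{\sigma(n)}))\big)$,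 where $\sigma$ is any permutation with $X_{\sigma(1)}\preceq\dots\preceq X_{\sigma(n)}$; it is defined when (Condition (WDS)) this value does not depend on the choice of such $\sigma$, for all inputs. *)

From mathcomp Require Import all_boot all_order all_algebra all_fingroup.
From mathcomp Require Import reals.
Set Implicit Arguments. Unset Strict Implicit. Unset Printing Implicit Defensive.
Import Order.TTheory GRing.Theory Num.Theory.
Local Open Scope ring_scope.

(* L([0,1]) : closed subintervals [a,b] of [0,1] *)
Record IV (R : realType) := mkIV {
  lo : R; hi : R;
  IV_prop : (0 <= lo) && (lo <= hi) && (hi <= 1) }.

Definition IV0 (R : realType) : IV R.
Proof. refine (@mkIV R 0 0 _). by rewrite lexx ler01. Defined.
Definition IV1 (R : realType) : IV R.
Proof. refine (@mkIV R 1 1 _). by rewrite lexx ler01. Defined.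

Definition admissible (R : realType) (le : IV R -> IV R -> bool) : Prop :=
  [/\ (forall x, le x x),
      (forall x y, le x y -> le y x -> x = y),
      (forall x y z, le x y -> le y z -> le x z),
      (forall x y, le x y || le y x) &
      (forall x y, lo x <= lo y -> hi x <= hi y -> le x y)].

Definition ivmax (R : realType) (le : IV R -> IV R -> bool) (x y : IV R) :=
  if le x y then y else x.

(* n-ary maximum w.r.t. le (IV0 is the least element of any admissible order) *)
Definition ivsup (R : realType) (le : IV R -> IV R -> bool) (n : nat)
  (X : 'I_n -> IV R) : IV R :=
  foldr (fun i acc => ivmax le (X i) acc) (IV0 R) (enum 'I_n).

Definition IV_fuzzy_measure (R : realType) (le : IV R -> IV R -> bool) (n : nat)
  (m : {set 'I_n} -> IV R) : Prop :=
  [/\ m set0 = IV0 R, m setT = IV1 R &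
      (forall A B : {set 'I_n}, A \subset B -> le (m A) (m B))].

Definition Eset (n : nat) (s : 'S_n) (i : 'I_n) : {set 'I_n} :=
  [set s j | j in [pred j : 'I_n | (i <= j)%N]].

Definition sorting_perm (R : realType) (le : IV R -> IV R -> bool) (n : nat)
  (X : 'I_n -> IV R) (s : 'S_n) : Prop :=
  forall i j : 'I_n, (i <= j)%N -> le (X (s i)) (X (s j)).

Definition SugenoFG (R : realType) (n : nat)
  (F : IV R -> IV R -> IV R) (G : ('I_n -> IV R) -> IV R)
  (m : {set 'I_n} -> IV R) (s : 'S_n) (X : 'I_n -> IV R) : IV R :=
  G (fun i => F (X (s i)) (m (Eset s i))).

From mathcomp Require Import all_boot all_order all_algebra all_fingroup.
From mathcomp Require Import reals.
From Stdlib Require Import FunctionalExtensionality.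
Import Order.TTheory GRing.Theory Num.Theory.
Local Open Scope ring_scope.

(* The first
   set E_{sigma(1)} is all of N, so the first term is F X 1 = X; in case (ii)
   monotonicity of m and of F in its second argument bounds every other term
   by F X 1 = X, so the maximum is attained and equals X. *)

Lemma Eset_ord0 (n : nat) (s : 'S_n) (i : 'I_n) :
  nat_of_ord i = 0%N -> Eset s i = setT.
Proof.
move=> i0; apply/setP => x; rewrite in_setT; apply/imsetP.
by exists (s^-1%g x); rewrite ?inE ?i0 ?permKV.
Qed.

Section AdmissibleOrder.

Context {R : realType} {le : IV R -> IV R -> bool}.
Hypothesis Hadm : admissible le.

Lemma IV0_le (X : IV R) : le (IV0 R) X.
Proof.
case: Hadm => _ _ _ _ mono; have /andP[/andP[lo0 lohi] _] := IV_prop X.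
by apply: mono => //=; apply: le_trans lohi.
Qed.

Lemma le_ivmaxl (X Y : IV R) : le X (ivmax le X Y).
Proof. by case: Hadm => refl _ _ _ _; rewrite /ivmax; case: ifP. Qed.

Lemma le_ivmaxr (X Y : IV R) : le Y (ivmax le X Y).
Proof.
case: Hadm => refl _ _ tot _; rewrite /ivmax; case: ifP => // /negbT nXY.
by move: (tot X Y); rewrite (negbTE nXY).
Qed.

Lemma ivmax_le (X Y Z : IV R) : le X Z -> le Y Z -> le (ivmax le X Y) Z.
Proof. by rewrite /ivmax; case: ifP. Qed.

Lemma le_ivsup {n : nat} (Xs : 'I_n -> IV R) (i : 'I_n) :
  le (Xs i) (ivsup le Xs).
Proof.
case: Hadm => _ _ trans _ _; rewrite /ivsup.
have : i \in enum 'I_n by rewrite mem_enum.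
elim: (enum 'I_n) => // j l IH /=; rewrite inE => /predU1P[-> | il].
  exact: le_ivmaxl.
exact: trans (IH il) (le_ivmaxr _ _).
Qed.

Lemma ivsup_le {n : nat} (Xs : 'I_n -> IV R) (Z : IV R) :
  (forall i, le (Xs i) Z) -> le (ivsup le Xs) Z.
Proof.
move=> XsZ; rewrite /ivsup; elim: (enum 'I_n) => [|j l IH] /=.
  exact: IV0_le.
exact: ivmax_le.
Qed.

Lemma ivsup_attained {n : nat} {Xs : 'I_n -> IV R} (i : 'I_n) :
  (forall j, le (Xs j) (Xs i)) -> ivsup le Xs = Xs i.
Proof.
case: Hadm => _ anti _ _ _ max_i.
by apply: anti; [apply: ivsup_le | apply: le_ivsup].
Qed.

Lemma fuzzy_measure_le1 {n : nat} {m : {set 'I_n} -> IV R} (A : {set 'I_n}) :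
  IV_fuzzy_measure le m -> le (m A) (IV1 R).
Proof. by case=> _ <- mono; apply/mono/subsetT. Qed.

End AdmissibleOrder.

Theorem proposition3 (R : realType) (n : nat) (hn : (0 < n)%N)
  (le : IV R -> IV R -> bool) (Hadm : admissible le)
  (F : IV R -> IV R -> IV R) (G : ('I_n -> IV R) -> IV R) :
  [\/ (forall X, F X (IV1 R) = X) /\ (forall Xs, G Xs = Xs (Ordinal hn)),
      [/\ (forall X, F X (IV1 R) = X),
          (forall X Y Y', le Y Y' -> le (F X Y) (F X Y')) &
          (forall Xs, G Xs = ivsup le Xs)]
    | (forall X, G (fun _ => X) = X) /\ (forall X Y, F X Y = X)] ->
  forall m : {set 'I_n} -> IV R, IV_fuzzy_measure le m ->
  forall (X : IV R) (s : 'S_n),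
    sorting_perm le (fun _ => X) s ->
    SugenoFG F G m s (fun _ => X) = X.
Proof.
move=> HFG m Hm X s _; rewrite /SugenoFG.
have first_term : F X (m (Eset s (Ordinal hn))) = F X (IV1 R).
  by case: Hm => _ m1 _; rewrite Eset_ord0 ?m1.
case: HFG => [[FX1 ->] | [FX1 Fmono ->] | [GX FX]].
- by rewrite first_term FX1.
- rewrite (ivsup_attained Hadm (Ordinal hn)) first_term ?FX1 // => j.
  by rewrite -{2}(FX1 X); apply: Fmono; apply: fuzzy_measure_le1 Hm.
- by rewrite -[RHS]GX; congr G; apply: functional_extensionality => i; rewrite FX.
Qed.
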